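(* Let $M$ be a dihedral axial decomposition algebra of Majorana type $(\eta,\eta)$ over a field $\mathbb{F}$ with $\operatorname{char}\mathbb{F}\neq2$, where $\eta\in\mathbb{F}\setminus\{0,1,\tfrac12\}$, with generating axes $(a_i)_{i\in\mathbb{Z}}$. Let $x,y,z\in M$ satisfy (i) $g(x)=x$ for all $g\in G$; (ii) $f_3(y)=y$, $\tau_0\circ f_1(y)=f_2(y)$ and $\tau_0(y)=y$; (iii) $\tau_0(z)=z$ and $\tau_0\circ f_1(z)=f_1(z)$; (iv) $x+y+z+\sum_{i=1}^k\alpha_i(a_i+a_{-i})+\alpha_0a_0=0$ for some $\alpha_0,\dots,\alpha_k\in\mathbb{F}$. Set $\alpha_i=0$ for $i>k$. Then: (1) $\alpha_k(a_{k+2}-a_{-k-2})+\sum_{i=1}^{k+1}(\alpha_{i-2}+\alpha_{i-1}-\alpha_{i+1}-\alpha_{i+2})(a_i-a_{-i})=0$, where $\alpha_{-1}=\alpha_1$. Thus if $\alpha_k\neq0$, then $\operatorname{adim}\le2k+4$, and if $\operatorname{adim}=2k+4$ then $M$ satisfies an odd relation. (2) If $y=0$, then $\alpha_k(a_{k+1}-a_{-k-1})+\sum_{i=1}^k(\alpha_{i-1}-\alpha_{i+1})(a_i-a_{-i})=0$. Thus if $\alpha_k\neq0$, then $\operatorname{adim}\le2k+2$, and if $\operatorname{adim}=2k+2$ then $M$ satisfies an odd relation. (3) If $y=z=0$, then $\alpha_k(a_{k+1}-a_{-k})+\sum_{i=0}^{k-1}(\alpha_i-\alpha_{i+1})(a_{i+1}-a_{-i})=0$.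 Thus if $\alpha_k\neq0$, then $\operatorname{adim}\le2k+1$, and if $\operatorname{adim}=2k+1$ then $M$ satisfies an odd relation.
   Context: $M$ is a commutative nonassociative $\mathbb{F}$-algebra. With $\Phi(0)=0,\Phi(1)=1,\Phi(2)=\Phi(3)=\eta$, an axis $a\in M$ is an element together with a decomposition $M=\bigoplus_{i=0}^3M^i(a)$ such that $xa=\Phi(i)x$ for $x\in M^i(a)$, $M^1(a)=\mathbb{F}a$, and $M^0(a)M^i(a)\subset M^i(a)$ for all $i$, $M^2(a)M^2(a)\subset M^0(a)\oplus M^1(a)$, $M^2(a)M^3(a)\subset M^3(a)$, $M^3(a)M^3(a)\subset M^0(a)\oplus M^1(a)\oplus M^2(a)$. The Miyamoto involution $\tau(a)$ is the automorphism acting as $1$ on $M^0(a)\oplus M^1(a)\oplus M^2(a)$ and $-1$ on $M^3(a)$. $M$ is dihedral (of Majorana type $(\eta,\eta)$) with axes $(a_i)_{i\in\mathbb{Z}}$ if: $M$ is generated by the $a_i$; $a_i\mapsto a_{i+1}$ extends to an automorphism of $M$; and $\tau(a_j)(a_i)=a_{2j-i}$ for all $i,j$. Notation: $f_i$ is the automorphism with $f_i(a_j)=a_{i+j}$ for all $j$; $\tau_0=\tau(a_0)$; $G=\langle f_1,\tau_0\rangle$. The axial dimension $\operatorname{adim}$ is $\dim_{\mathbb{F}}\operatorname{Span}\{a_i:i\in\mathbb{Z}\}$. $M$ satisfies an odd relation if either $\operatorname{adim}=2m$ and there are $\beta_1,\dots,\beta_m\in\mathbb{F}$ with $\beta_m\neq0$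 and $\sum_{i=1}^m\beta_i(a_i-a_{-i})=0$, or $\operatorname{adim}=2m+1$ and there are $\beta_0,\dots,\beta_m\in\mathbb{F}$ with $\beta_m\neq0$ and $\sum_{i=0}^m\beta_i(a_{i+1}-a_{-i})=0$. *)

From HB Require Import structures.
From mathcomp Require Import all_boot all_order all_algebra.
Set Implicit Arguments. Unset Strict Implicit. Unset Printing Implicit Defensive.
Import GRing.Theory.
Local Open Scope ring_scope.

Definition comm_bilinear (F : fieldType) (M : lmodType F) (mul : M -> M -> M) :=
  (forall u v, mul u v = mul v u) /\
  (forall c u v w, mul (c *: u + v) w = c *: mul u w + mul v w).

Definition is_subspace (F : fieldType) (M : lmodType F) (S : M -> Prop) :=
  S 0 /\ (forall u v, S u -> S v -> S (u + v)) /\ (forall c u, S u -> S (c *: u)).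

(* Axis: W j = M^j(a) for j = 0,1,2,3; Phi(0)=0, Phi(1)=1, Phi(2)=Phi(3)=eta. *)
Definition is_axis (F : fieldType) (M : lmodType F) (mul : M -> M -> M)
    (eta : F) (a : M) (W : nat -> M -> Prop) :=
  (forall j, (j < 4)%N -> is_subspace (W j)) /\
  (forall u, exists u0 u1 u2 u3,
      [/\ W 0%N u0, W 1%N u1, W 2%N u2 & W 3%N u3] /\ u = u0 + u1 + u2 + u3) /\
  (forall u0 u1 u2 u3, W 0%N u0 -> W 1%N u1 -> W 2%N u2 -> W 3%N u3 ->
      u0 + u1 + u2 + u3 = 0 -> [/\ u0 = 0, u1 = 0, u2 = 0 & u3 = 0]) /\
  (forall u, W 0%N u -> mul u a = 0) /\
  (forall u, W 1%N u -> mul u a = u) /\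
  (forall u, W 2%N u -> mul u a = eta *: u) /\
  (forall u, W 3%N u -> mul u a = eta *: u) /\
  (forall u, W 1%N u <-> exists c : F, u = c *: a) /\
  (forall j u v, (j < 4)%N -> W 0%N u -> W j v -> W j (mul u v)) /\
  (forall u v, W 2%N u -> W 2%N v ->
      exists w0 w1, W 0%N w0 /\ W 1%N w1 /\ mul u v = w0 + w1) /\
  (forall u v, W 2%N u -> W 3%N v -> W 3%N (mul u v)) /\
  (forall u v, W 3%N u -> W 3%N v ->
      exists w0 w1 w2, [/\ W 0%N w0, W 1%N w1 & W 2%N w2] /\ mul u v = w0 + w1 + w2).

(* [miyamoto W u w] : tau(a)(u) = w, where tau(a) acts as 1 on M^0+M^1+M^2
   and as -1 on M^3 (W the decomposition attached to the axis a). *)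
Definition miyamoto (F : fieldType) (M : lmodType F) (W : nat -> M -> Prop)
    (u w : M) :=
  exists u0 u1 u2 u3, [/\ W 0%N u0, W 1%N u1, W 2%N u2 & W 3%N u3] /\
    u = u0 + u1 + u2 + u3 /\ w = u0 + u1 + u2 - u3.

Definition is_auto (F : fieldType) (M : lmodType F) (mul : M -> M -> M)
    (f : M -> M) :=
  (forall c u v, f (c *: u + v) = c *: f u + f v) /\ bijective f /\
  (forall u v, f (mul u v) = mul (f u) (f v)).

Definition generated_by (F : fieldType) (M : lmodType F) (mul : M -> M -> M)
    (a : int -> M) :=
  forall S : M -> Prop, is_subspace S -> (forall u v, S u -> S v -> S (mul u v)) ->
    (forall i, S (a i)) -> forall u, S u.

Definition dihedral (F : fieldType) (M : lmodType F) (mul : M -> M -> M)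
    (eta : F) (a : int -> M) (V : int -> nat -> M -> Prop) :=
  [/\ generated_by mul a,
      (exists f, is_auto mul f /\ forall i, f (a i) = a (i + 1)),
      (forall i, is_axis mul eta (a i) (V i)) &
      (forall i j, miyamoto (V j) (a i) (a (2 * j - i)))].

Inductive in_gen_group (M : Type) (gens : (M -> M) -> Prop) : (M -> M) -> Prop :=
  | gg_id : in_gen_group gens id
  | gg_gen : forall g, gens g -> in_gen_group gens g
  | gg_comp : forall g h, in_gen_group gens g -> in_gen_group gens h ->
      in_gen_group gens (g \o h)
  | gg_inv : forall g h, in_gen_group gens g -> cancel g h -> cancel h g ->
      in_gen_group gens h.

Definition in_span_a (F : fieldType) (M : lmodType F) (a : int -> M) (u : M) :=
  exists (s : seq int) (c : int -> F), u = \sum_(i <- s) c i *: a i.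

Definition adim_is (F : fieldType) (M : lmodType F) (a : int -> M) (n : nat) :=
  exists b : 'I_n -> M,
    (forall c : 'I_n -> F, \sum_(l < n) c l *: b l = 0 -> forall l, c l = 0) /\
    (forall l, in_span_a a (b l)) /\
    (forall j, exists c : 'I_n -> F, a j = \sum_(l < n) c l *: b l).

Definition adim_le (F : fieldType) (M : lmodType F) (a : int -> M) (N : nat) :=
  exists n, (n <= N)%N /\ adim_is a n.

Definition odd_relation (F : fieldType) (M : lmodType F) (a : int -> M) :=
  (exists m : nat, (0 < m)%N /\ adim_is a (2 * m) /\
     exists beta : nat -> F, beta m != 0 /\
       \sum_(1 <= i < m.+1) beta i *: (a (i%:Z) - a (- i%:Z)) = 0) \/
  (exists m : nat, adim_is a (2 * m).+1 /\
     exists beta : nat -> F, beta m != 0 /\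
       \sum_(0 <= i < m.+1) beta i *: (a (i%:Z + 1) - a (- i%:Z)) = 0).

From HB Require Import structures.
From mathcomp Require Import all_boot all_order all_algebra.
From mathcomp Require Import zify ring.
From Stdlib Require Import Classical.
Set Implicit Arguments. Unset Strict Implicit.
Import GRing.Theory.
Local Open Scope ring_scope.

(* Write S = sum_{i=1}^k alpha_i (a_i + a_{-i}) + alpha_0 a_0, so that x + y + z + S = 0.
   Applying f_1 and then tau_0 fixes x and f_1 z, and turns f_1 y into f_2 y; subtracting
   the two equations leaves D := f_1 S - tau_0 f_1 S = f_2 y - f_1 y.  As f_3 y = y, the
   vectors D, f_1 D, f_1^2 D telescope to 0, which after applying f_1^-1 is relation (1)
   once D is expanded on the antisymmetric vectors a_i - a_{-i}.  If y = 0 then D = 0 is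
   relation (2); if also z = 0, comparing x + S = 0 with its image under f_1 gives
   f_1 S = S, which is relation (3).  Each relation has coefficient alpha_k on its two
   extreme axes, so both lie in the span of the axes strictly between them; translating
   by f_1 and f_1^-1, the window of hi - lo consecutive axes then spans every a_i, and
   when adim = hi - lo the relation itself is an odd relation. *)

(* Linear identities in an F-module M are proved by [ring] in the trivial extension
   F x M with (c, u) (d, v) = (c d, c v + d u), which contains M as an additive subgroup
   on which F acts by multiplication. *)
Section TrivialExtension.
Variables (F : fieldType) (M : lmodType F).

Definition triv_ext := (F * M)%type.
HB.instance Definition _ := GRing.Zmodule.on triv_ext.

Definition triv_mul (x y : triv_ext) : triv_ext :=
  (x.1 * y.1, x.1 *: y.2 + y.1 *: x.2).

Lemma triv_mulA : associative triv_mul.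
Proof.
move=> [a u] [b v] [c w]; congr (_, _); rewrite /= ?mulrA //.
by rewrite !scalerDr !scalerA addrA (mulrC c a) (mulrC c b).
Qed.

Lemma triv_mulC : commutative triv_mul.
Proof. by move=> [a u] [b v]; rewrite /triv_mul /= mulrC addrC. Qed.

Lemma triv_mul1 : left_id (1, 0) triv_mul.
Proof. by move=> [a u]; rewrite /triv_mul /= mul1r scale1r scaler0 addr0. Qed.

Lemma triv_mulDl : left_distributive triv_mul +%R.
Proof.
move=> [a u] [b v] [c w]; congr (_, _); rewrite /= ?mulrDl //.
by rewrite scalerDl scalerDr addrACA.
Qed.

HB.instance Definition _ :=
  GRing.Zmodule_isComPzRing.Build triv_ext triv_mulA triv_mulC triv_mul1 triv_mulDl.

Definition triv_vec (u : M) : triv_ext := (0, u).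
Definition triv_scal (c : F) : triv_ext := (c, 0).

Lemma triv_vec_inj : injective triv_vec. Proof. by move=> u v []. Qed.
Lemma triv_vec0 : triv_vec 0 = 0. Proof. by []. Qed.
Lemma triv_vecD u v : triv_vec (u + v) = triv_vec u + triv_vec v.
Proof. by congr (_, _); rewrite addr0. Qed.
Lemma triv_vecN u : triv_vec (- u) = - triv_vec u.
Proof. by congr (_, _); rewrite oppr0. Qed.
Lemma triv_vecZ c u : triv_vec (c *: u) = triv_scal c * triv_vec u.
Proof. by congr (_, _); rewrite /= ?mulr0 // scaler0 addr0. Qed.
Lemma triv_scal0 : triv_scal 0 = 0. Proof. by []. Qed.
Lemma triv_scal1 : triv_scal 1 = 1. Proof. by []. Qed.
Lemma triv_scalD c d : triv_scal (c + d) = triv_scal c + triv_scal d.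
Proof. by congr (_, _); rewrite addr0. Qed.
Lemma triv_scalN c : triv_scal (- c) = - triv_scal c.
Proof. by congr (_, _); rewrite oppr0. Qed.
Lemma triv_scalM c d : triv_scal (c * d) = triv_scal c * triv_scal d.
Proof. by congr (_, _); rewrite /= !scaler0 addr0. Qed.

End TrivialExtension.

Ltac module_ring :=
  apply: triv_vec_inj;
  rewrite ?(triv_vec0, triv_vecD, triv_vecN, triv_vecZ,
            triv_scal0, triv_scal1, triv_scalD, triv_scalN, triv_scalM);
  ring.

Lemma big_nat_recr_ifeq (F : fieldType) (V : lmodType F) m n c (d : nat -> F)
    (G : nat -> V) : (m <= n)%N ->
  \sum_(m <= i < n.+1) (if i == n then c else d i) *: G i
    = c *: G n + \sum_(m <= i < n) d i *: G i.
Proof.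
move=> le_mn; rewrite big_nat_recr //= eqxx addrC; congr (_ + _).
by apply: eq_big_nat => i /andP[_ lt_in]; rewrite ltn_eqF.
Qed.

Section Subspace.
Variables (F : fieldType) (M : lmodType F) (S : M -> Prop).
Hypothesis S_subspace : is_subspace S.

Lemma subspace0 : S 0. Proof. by case: S_subspace. Qed.

Lemma subspaceD u v : S u -> S v -> S (u + v).
Proof. by case: S_subspace => _ [SD _]; apply: SD. Qed.

Lemma subspaceZ c u : S u -> S (c *: u).
Proof. by case: S_subspace => _ [_ SZ]; apply: SZ. Qed.

Lemma subspaceB u v : S u -> S v -> S (u - v).
Proof. by move=> Su Sv; rewrite -scaleN1r; apply: subspaceD => //; apply: subspaceZ. Qed.

Lemma subspace_sum I (r : seq I) (P : pred I) (G : I -> M) :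
  (forall i, P i -> S (G i)) -> S (\sum_(i <- r | P i) G i).
Proof. by move=> SG; apply: big_ind => //; [exact: subspace0 | exact: subspaceD]. Qed.

Lemma subspace_sum_nat m n (G : nat -> M) :
  (forall i, (m <= i < n)%N -> S (G i)) -> S (\sum_(m <= i < n) G i).
Proof. by move=> SG; rewrite big_nat_cond; apply: subspace_sum => i /andP[/SG]. Qed.

Lemma subspace_solve c p X : c != 0 -> c *: p + X = 0 -> S X -> S p.
Proof.
move=> c0 rel SX; rewrite -[p](scalerK c0) -[c *: p]opprK (addr0_eq rel).
by apply: subspaceZ; rewrite -scaleN1r; apply: subspaceZ.
Qed.

End Subspace.

Section Miyamoto.
Variables (F : fieldType) (M : lmodType F) (mul : M -> M -> M) (eta : F).
Variables (a0 : M) (W : nat -> M -> Prop).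
Hypothesis axis : is_axis mul eta a0 W.

Lemma miyamoto_uniq u w w' : miyamoto W u w -> miyamoto W u w' -> w = w'.
Proof.
case: axis => Wsub [_ [Wdirect _]].
move=> [u0 [u1 [u2 [u3 [[W0u W1u W2u W3u] [-> ->]]]]]].
move=> [v0 [v1 [v2 [v3 [[W0v W1v W2v W3v] [e ->]]]]]].
have WB j s t : (j < 4)%N -> W j s -> W j t -> W j (s - t).
  by move=> /Wsub Wj; apply: subspaceB.
have sum0 : u0 - v0 + (u1 - v1) + (u2 - v2) + (u3 - v3) = 0.
  rewrite -(subrr (v0 + v1 + v2 + v3)) -{1}e; module_ring.
have [] := Wdirect _ _ _ _ (WB 0%N _ _ isT W0u W0v) (WB 1%N _ _ isT W1u W1v)
  (WB 2%N _ _ isT W2u W2v) (WB 3%N _ _ isT W3u W3v) sum0.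
by move=> /subr0_eq-> /subr0_eq-> /subr0_eq-> /subr0_eq->.
Qed.

Lemma miyamoto_combination c u v w w' :
  miyamoto W u w -> miyamoto W v w' -> miyamoto W (c *: u + v) (c *: w + w').
Proof.
case: axis => Wsub _.
move=> [u0 [u1 [u2 [u3 [[W0u W1u W2u W3u] [-> ->]]]]]].
move=> [v0 [v1 [v2 [v3 [[W0v W1v W2v W3v] [-> ->]]]]]].
have WC j s t : (j < 4)%N -> W j s -> W j t -> W j (c *: s + t).
  by move=> /Wsub Wj Ws Wt; apply: subspaceD => //; apply: subspaceZ.
exists (c *: u0 + v0), (c *: u1 + v1), (c *: u2 + v2), (c *: u3 + v3).
by split; [split; exact: WC | split; module_ring].
Qed.

Lemma miyamoto_linear (tau : M -> M) :
  (forall u, miyamoto W u (tau u)) -> linear tau.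
Proof.
move=> tauW c u v; apply: miyamoto_uniq (tauW _) _.
exact: miyamoto_combination.
Qed.

End Miyamoto.

Lemma dihedral_reflection (F : fieldType) (M : lmodType F) (mul : M -> M -> M) (eta : F)
    (a : int -> M) (V : int -> nat -> M -> Prop) (tau : M -> M) :
  dihedral mul eta a V -> (forall u, miyamoto (V 0) u (tau u)) ->
  forall j, tau (a j) = a (- j).
Proof.
case=> _ _ axes reflections tauW j.
by rewrite (miyamoto_uniq (axes 0) (tauW (a j)) (reflections j 0)) mulr0 sub0r.
Qed.

Definition linear_of (F : fieldType) (M : lmodType F) (f : M -> M) (f_lin : linear f)
  : {linear M -> M} := HB.pack f (GRing.isLinear.Build F M M *:%R f f_lin).

Lemma generated_auto_comp (F : fieldType) (M : lmodType F) (mul : M -> M -> M)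
    (a : int -> M) (h1 h2 h : M -> M) (m n : int) :
  generated_by mul a -> is_auto mul h1 -> is_auto mul h2 -> is_auto mul h ->
  (forall j, h1 (a j) = a (m + j)) -> (forall j, h2 (a j) = a (n + j)) ->
  (forall j, h (a j) = a (m + n + j)) ->
  forall u, h1 (h2 u) = h u.
Proof.
move=> gen [h1_lin [_ h1M]] [h2_lin [_ h2M]] [h_lin [_ hM]] h1a h2a ha.
pose L1 := linear_of h1_lin; pose L2 := linear_of h2_lin; pose L := linear_of h_lin.
have L12E u : h1 (h2 u) = L1 (L2 u) by [].
have LE u : h u = L u by [].
apply: (gen (fun u => h1 (h2 u) = h u)).
- split; first by rewrite L12E LE !linear0.
  split=> [u v | c u]; rewrite !L12E !LE.
    by move=> eu ev; rewrite !linearD eu ev.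
  by move=> eu; rewrite !linearZ eu.
- by move=> u v eu ev; rewrite h2M h1M hM eu ev.
- by move=> j; rewrite h2a h1a ha addrA.
Qed.

Lemma shift_inverse (F : fieldType) (M : lmodType F) (mul : M -> M -> M) (a : int -> M)
    (f : M -> M) :
  is_auto mul f -> (forall j, f (a j) = a (1 + j)) ->
  exists2 g : {linear M -> M}, cancel f g & forall j, g (a j) = a (-1 + j).
Proof.
move=> [f_lin [[g fK gK] _]] fa.
exists (linear_of (can2_linear (f := linear_of f_lin) fK gK)) => // j.
by apply: (can_inj fK); rewrite /= gK fa addNKr.
Qed.

Section Span.
Variables (F : fieldType) (M : lmodType F).
Implicit Types (b : nat -> M) (v : M).

Definition in_span b n v := exists c : nat -> F, v = \sum_(l < n) c l *: b l.

Definition lin_indep b n :=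
  forall c : nat -> F, \sum_(l < n) c l *: b l = 0 -> forall l, (l < n)%N -> c l = 0.

Lemma in_span_subspace b n : is_subspace (in_span b n).
Proof.
split; first by exists (fun=> 0); rewrite big1 // => l _; rewrite scale0r.
split=> [u v [c ->] [d ->] | e u [c ->]].
  exists (fun l => c l + d l); rewrite -big_split.
  by apply: eq_bigr => l _; rewrite scalerDl.
by exists (fun l => e * c l); rewrite scaler_sumr; apply: eq_bigr => l _; rewrite scalerA.
Qed.

Lemma in_span_gen b n l : (l < n)%N -> in_span b n (b l).
Proof.
move=> lt_ln; exists (fun i => if i == l then 1 else 0).
rewrite (bigD1 (Ordinal lt_ln)) //= eqxx scale1r big1 ?addr0 // => i ne_il.
by rewrite ifN ?scale0r //; apply: contra ne_il => /eqP eq_il; apply/eqP/val_inj.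
Qed.

Lemma in_span_trans b b' n n' v :
  (forall l, (l < n)%N -> in_span b' n' (b l)) -> in_span b n v -> in_span b' n' v.
Proof.
move=> bb' [c ->]; apply: (subspace_sum (in_span_subspace b' n')) => l _.
exact: (subspaceZ (in_span_subspace b' n') _ (bb' l (ltn_ord l))).
Qed.

Definition extend b n v := fun l => if l == n then v else b l.

Lemma in_span_extend b n v u : in_span b n u -> in_span (extend b n v) n.+1 u.
Proof.
move=> [c ->]; exists (fun l => if l == n then 0 else c l).
rewrite big_ord_recr /= eqxx scale0r addr0.
by apply: eq_bigr => l _; rewrite /extend (ltn_eqF (ltn_ord l)).
Qed.

Lemma lin_indep_extend b n v :
  lin_indep b n -> ~ in_span b n v -> lin_indep (extend b n v) n.+1.
Proof.
move=> indep v_out c; rewrite big_ord_recr /= /extend eqxx.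
under eq_bigr => l _ do rewrite (ltn_eqF (ltn_ord l)).
move=> rel.
have cn0 : c n = 0.
  have [//|cn] := eqVneq (c n) 0; case: v_out.
  rewrite addrC in rel; apply: (subspace_solve (in_span_subspace b n) cn rel).
  apply: (subspace_sum (in_span_subspace b n)) => l _.
  exact: (subspaceZ (in_span_subspace b n) _ (in_span_gen b (ltn_ord l))).
move: rel; rewrite cn0 scale0r addr0 => /indep c0 l.
by rewrite ltnS leq_eqVlt => /predU1P[->|/c0].
Qed.

Lemma exists_basis (v : nat -> M) N :
  exists n b, [/\ (n <= N)%N, forall l, (l < n)%N -> exists2 i, (i < N)%N & b l = v i,
                  lin_indep b n & forall i, (i < N)%N -> in_span b n (v i)].
Proof.
elim: N => [|N [n [b [le_nN b_v indep span_v]]]]; first by exists 0%N, v.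
have [vN_in | vN_out] := classic (in_span b n (v N)).
  exists n, b; split=> [||//|i]; first exact: leqW.
    by move=> l /b_v[i lt_iN ->]; exists i => //; exact: ltnW.
  by rewrite ltnS leq_eqVlt => /predU1P[->|/span_v].
exists n.+1, (extend b n (v N)); split=> [//||| i].
- move=> l; rewrite ltnS leq_eqVlt /extend => /predU1P[->|lt_ln].
    by exists N; rewrite ?eqxx.
  by rewrite (ltn_eqF lt_ln); have [j lt_jN ->] := b_v l lt_ln; exists j => //; exact: ltnW.
- exact: lin_indep_extend.
- rewrite ltnS leq_eqVlt => /predU1P[->|/span_v/in_span_extend //].
  by have := in_span_gen (extend b n (v N)) (ltnSn n); rewrite /extend eqxx.
Qed.

End Span.

Section Window.
Variables (F : fieldType) (M : lmodType F) (a : int -> M).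

Definition window (lo : int) (N : nat) := in_span (fun i : nat => a (lo + i%:Z)) N.

Lemma window_subspace lo N : is_subspace (window lo N).
Proof. exact: in_span_subspace. Qed.

Lemma window_axis lo N j : lo <= j -> j < lo + N%:Z -> window lo N (a j).
Proof.
move=> le_lo_j lt_j_hi; have -> : j = lo + `|j - lo|%N%:Z by lia.
by apply: in_span_gen; lia.
Qed.

Lemma window_trans lo N lo' N' u :
  window lo' N' u ->
  (forall j, lo' <= j -> j < lo' + N'%:Z -> window lo N (a j)) -> window lo N u.
Proof. by move=> u_in axes; apply: in_span_trans u_in => l lt_lN'; apply: axes; lia. Qed.

Lemma window_widen lo N lo' N' u :
  lo <= lo' -> lo' + N'%:Z <= lo + N%:Z -> window lo' N' u -> window lo N u.
Proof. by move=> le_lo hi_le u_in; apply: window_trans u_in _ => j *; apply: window_axis; lia. Qed.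

Lemma window_shift (h : {linear M -> M}) d lo N u :
  (forall j, h (a j) = a (d + j)) -> window lo N u -> window (d + lo) N (h u).
Proof.
move=> ha [c ->]; exists c; rewrite linear_sum; apply: eq_bigr => i _.
by rewrite linearZ ha addrA.
Qed.

Lemma window_all_axes lo N :
  (forall j, window j N (a (j + N%:Z))) -> (forall j, window (j + 1) N (a j)) ->
  forall j, window lo N (a j).
Proof.
move=> fwd bwd.
suff axes n j : lo - n%:Z <= j < lo + N%:Z + n%:Z -> window lo N (a j).
  by move=> j; apply: (axes `|j - lo|%N.+1); lia.
elim: n j => [|n IH] j range; first by apply: window_axis; lia.
have [j_hi | [j_lo | j_in]] :
    j = lo + n%:Z + N%:Z \/ j = lo - n%:Z - 1 \/ lo - n%:Z <= j < lo + N%:Z + n%:Z by lia.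
- by rewrite j_hi; apply: (window_trans (fwd _)) => i *; apply: IH; lia.
- by apply: (window_trans (bwd j)) => i *; apply: IH; lia.
- exact: IH.
Qed.

Lemma adim_le_window lo N : (forall j, window lo N (a j)) -> adim_le a N.
Proof.
move=> axes.
have [n [b [le_nN b_axis indep span_axes]]] := exists_basis (fun i : nat => a (lo + i%:Z)) N.
exists n; split=> //; exists (fun l : 'I_n => b l); split; [|split].
- move=> c sum0 l.
  pose c' i := if insub i is Some l' then c l' else 0.
  have := indep c' _ l (ltn_ord l); rewrite /c' valK; apply.
  by rewrite -[RHS]sum0; apply: eq_bigr => i _; rewrite valK.
- move=> l; have [i _ ->] := b_axis l (ltn_ord l).
  by exists [:: lo + i%:Z], (fun=> 1); rewrite big_seq1 scale1r.
- by move=> j; have [c ->] := in_span_trans span_axes (axes j); exists (fun l : 'I_n => c l).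
Qed.

Section Translation.
Variables (f g : {linear M -> M}).
Hypotheses (fa : forall j, f (a j) = a (1 + j)) (ga : forall j, g (a j) = a (-1 + j)).

Lemma window_translate lo N p :
  window lo N (a (lo + p)) -> forall j, window j N (a (j + p)).
Proof.
move=> lo_in j; rewrite -[j](subrK lo); move: (j - lo) => n.
elim/int_ind: n => [|n IH|n IH]; first by rewrite add0r.
- have -> : n.+1%:Z + lo = 1 + (n%:Z + lo) by lia.
  by rewrite -addrA -fa; apply: window_shift.
- have -> : - n.+1%:Z + lo = -1 + (- n%:Z + lo) by lia.
  by rewrite -addrA -ga; apply: window_shift.
Qed.

Lemma adim_le_extreme_relation lo N c X :
  (0 < N)%N -> c != 0 -> c *: (a (lo + N%:Z) - a lo) + X = 0 ->
  window (lo + 1) N.-1 X -> adim_le a N.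
Proof.
move=> N_gt0 c0 rel X_in.
have diff_in lo' : lo' <= lo + 1 -> lo + N%:Z <= lo' + N%:Z ->
    window lo' N (a (lo + N%:Z) - a lo).
  move=> le_lo' le_hi; apply: (subspace_solve (window_subspace lo' N) c0 rel).
  by apply: window_widen X_in; lia.
have hi_in : window lo N (a (lo + N%:Z)).
  rewrite -[a (lo + _)](subrK (a lo)); apply: (subspaceD (window_subspace lo N)).
    by apply: diff_in; lia.
  by apply: window_axis; lia.
have lo_in : window (lo + 1) N (a (lo + 1 + -1)).
  rewrite addrK -[a lo](subKr (a (lo + N%:Z))).
  apply: (subspaceB (window_subspace (lo + 1) N)); first by apply: window_axis; lia.
  by apply: diff_in; lia.
apply: (adim_le_window (lo := lo)); apply: window_all_axes => j.
  exact: window_translate hi_in j.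
by have := window_translate lo_in (j + 1); rewrite addrK.
Qed.

Lemma antisym_relation_adim m c (d : nat -> F) : c != 0 ->
  c *: (a m.+1%:Z - a (- m.+1%:Z))
    + \sum_(1 <= i < m.+1) d i *: (a i%:Z - a (- i%:Z)) = 0 ->
  adim_le a (2 * m.+1) /\ (adim_is a (2 * m.+1) -> odd_relation a).
Proof.
move=> c0 rel; split.
  have rel' : c *: (a (- m.+1%:Z + (2 * m.+1)%N%:Z) - a (- m.+1%:Z))
      + \sum_(1 <= i < m.+1) d i *: (a i%:Z - a (- i%:Z)) = 0.
    by rewrite (_ : - m.+1%:Z + _ = m.+1%:Z); last lia.
  apply: (adim_le_extreme_relation _ c0 rel') => //.
  apply: (subspace_sum_nat (window_subspace _ _)) => i range.
  apply: (subspaceZ (window_subspace _ _)); apply: (subspaceB (window_subspace _ _));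
    by apply: window_axis; lia.
move=> dim; left; exists m.+1; split=> //; split=> //.
exists (fun i => if i == m.+1 then c else d i); split; first by rewrite eqxx.
by rewrite big_nat_recr_ifeq.
Qed.

Lemma shifted_relation_adim m c (d : nat -> F) : c != 0 ->
  c *: (a (m%:Z + 1) - a (- m%:Z))
    + \sum_(0 <= i < m) d i *: (a (i%:Z + 1) - a (- i%:Z)) = 0 ->
  adim_le a (2 * m).+1 /\ (adim_is a (2 * m).+1 -> odd_relation a).
Proof.
move=> c0 rel; split.
  have rel' : c *: (a (- m%:Z + (2 * m).+1%:Z) - a (- m%:Z))
      + \sum_(0 <= i < m) d i *: (a (i%:Z + 1) - a (- i%:Z)) = 0.
    by rewrite (_ : - m%:Z + _ = m%:Z + 1); last lia.
  apply: (adim_le_extreme_relation _ c0 rel') => //.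
  apply: (subspace_sum_nat (window_subspace _ _)) => i range.
  apply: (subspaceZ (window_subspace _ _)); apply: (subspaceB (window_subspace _ _));
    by apply: window_axis; lia.
move=> dim; right; exists m; split=> //.
exists (fun i => if i == m then c else d i); split; first by rewrite eqxx.
by rewrite big_nat_recr_ifeq.
Qed.

End Translation.

End Window.

Section SummationByParts.
Variables (F : fieldType) (V : lmodType F).
Implicit Types (c : nat -> F) (G : nat -> V).

Lemma eq_of_subr_eq (u v u' v' : V) : u - v = u' - v' -> u' = v' -> u = v.
Proof. by move=> e e'; apply: subr0_eq; rewrite e e' subrr. Qed.

Lemma sum_by_parts_backward c G n :
  \sum_(1 <= i < n.+1) c i *: (G i - G i.-1) + c 0%N *: G 0%N
  = c n *: G n + \sum_(0 <= i < n) (c i - c i.+1) *: G i.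
Proof.
elim: n => [|n IH]; first by rewrite !big_geq // add0r addr0.
rewrite big_nat_recr // [in RHS]big_nat_recr //=.
by apply: (eq_of_subr_eq _ IH); module_ring.
Qed.

Lemma sum_by_parts_central c G n : G 0%N = 0 ->
  \sum_(1 <= i < n.+1) c i *: (G i.+1 - G i.-1) + c 0%N *: G 1%N
  = c n *: G n.+1 + c n.+1 *: G n + \sum_(1 <= i < n.+1) (c i.-1 - c i.+1) *: G i.
Proof.
move=> G0; elim: n => [|n IH]; first by rewrite !big_geq // G0; module_ring.
rewrite big_nat_recr // [in RHS]big_nat_recr //=.
by apply: (eq_of_subr_eq _ IH); module_ring.
Qed.

Lemma sum_by_parts_average c G n : G 0%N = 0 -> c 0%N = 0 ->
  \sum_(1 <= i < n.+1) c i *: (G i.-1 + G i + G i.+1)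
  = \sum_(1 <= i < n.+1) (c i.-1 + c i + c i.+1) *: G i
    + c n *: G n.+1 - c n.+1 *: G n.
Proof.
move=> G0 c0; elim: n => [|n IH]; first by rewrite !big_geq // G0 c0; module_ring.
rewrite big_nat_recr // [in RHS]big_nat_recr //=.
by apply: (eq_of_subr_eq _ IH); module_ring.
Qed.

End SummationByParts.

Section InvariantDecomposition.
Variables (F : fieldType) (M : lmodType F) (f tau : {linear M -> M}) (x y z S : M).
Hypotheses (fx : f x = x) (sum0 : x + y + z + S = 0).

Lemma shift_fixed : y = 0 -> z = 0 -> f S = S.
Proof.
move=> y0 z0; have fsum0 := congr1 f sum0.
move: sum0 fsum0; rewrite y0 z0 !linearD fx !linear0 !addr0 => xS xfS.
by apply: (addrI x); rewrite xS xfS.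
Qed.

Hypotheses (taux : tau x = x) (tau_fz : tau (f z) = f z) (tau_fy : tau (f y) = f (f y)).

Lemma antisym_shift_eq : f S - tau (f S) = f (f y) - f y.
Proof.
have e1 := congr1 f sum0; rewrite !linearD fx linear0 in e1.
have e2 := congr1 tau e1; rewrite !linearD taux tau_fz tau_fy linear0 in e2.
by apply: subr0_eq; rewrite -(subrr 0) -{1}e1 -e2; module_ring.
Qed.

Local Notation D := (f S - tau (f S)).

Lemma antisym_shift_orbit (g : {linear M -> M}) :
  cancel f g -> f (f (f y)) = y -> g D + D + f D = 0.
Proof. by move=> fK fy3; rewrite antisym_shift_eq !linearB !fK fy3; module_ring. Qed.

End InvariantDecomposition.

Section AxisRelations.
Variables (F : fieldType) (M : lmodType F) (a : int -> M).

Definition sym_comb k (alpha : nat -> F) :=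
  \sum_(1 <= i < k.+1) alpha i *: (a i%:Z + a (- i%:Z)) + alpha 0%N *: a 0.

Variables (f g tau : {linear M -> M}).
Hypotheses (fa : forall j, f (a j) = a (1 + j)) (ga : forall j, g (a j) = a (-1 + j)).
Hypothesis taua : forall j, tau (a j) = a (- j).

Lemma average_antisym_comb (d : nat -> F) n : d 0%N = 0 ->
  let D := \sum_(1 <= i < n.+1) d i *: (a i%:Z - a (- i%:Z)) in
  g D + D + f D
  = \sum_(1 <= i < n.+1) (d i.-1 + d i + d i.+1) *: (a i%:Z - a (- i%:Z))
    + d n *: (a n.+1%:Z - a (- n.+1%:Z)) - d n.+1 *: (a n%:Z - a (- n%:Z)).
Proof.
move=> d0 D; rewrite -sum_by_parts_average ?subrr // /D !linear_sum -!big_split.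
apply: eq_big_nat => i /andP[i_gt0 _] /=; rewrite !linearZ !linearB !fa !ga.
have -> : -1 + i%:Z = i.-1%:Z by lia.
have -> : -1 + - i%:Z = - i.+1%:Z by lia.
have -> : 1 + i%:Z = i.+1%:Z by lia.
have -> : 1 + - i%:Z = - i.-1%:Z by lia.
by module_ring.
Qed.

Variables (k : nat) (alpha : nat -> F).
Hypothesis alpha_vanish : forall i, (k < i)%N -> alpha i = 0.
Local Notation S := (sym_comb k alpha).

Lemma shift_sym_comb :
  f S = \sum_(1 <= i < k.+1) alpha i *: (a i.+1%:Z + a (- i.-1%:Z)) + alpha 0%N *: a 1.
Proof.
rewrite linearD linear_sum linearZ fa addr0; congr (_ + _).
apply: eq_big_nat => i /andP[i_gt0 _]; rewrite linearZ linearD !fa.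
by congr (_ *: (a _ + a _)); lia.
Qed.

Lemma shift_sub_sym_comb :
  f S - S = alpha k *: (a (k%:Z + 1) - a (- k%:Z))
            + \sum_(0 <= i < k) (alpha i - alpha i.+1) *: (a (i%:Z + 1) - a (- i%:Z)).
Proof.
rewrite -(sum_by_parts_backward alpha (fun i : nat => a (i%:Z + 1) - a (- i%:Z))).
rewrite shift_sym_comb /sym_comb opprD addrACA -sumrB; congr (_ + _); last first.
  by rewrite oppr0 add0r -scalerBr.
apply: eq_big_nat => i /andP[i_gt0 _].
have -> : i.-1%:Z + 1 = i%:Z by lia.
have -> : i%:Z + 1 = i.+1%:Z by lia.
by module_ring.
Qed.

Lemma antisym_shift_sym_comb :
  f S - tau (f S)
  = alpha k *: (a (k%:Z + 1) - a (- (k%:Z + 1)))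
    + \sum_(1 <= i < k.+1) (alpha i.-1 - alpha i.+1) *: (a i%:Z - a (- i%:Z)).
Proof.
rewrite (_ : k%:Z + 1 = k.+1%:Z); last by lia.
have B0 : a 0%N%:Z - a (- 0%N%:Z) = 0 by rewrite oppr0 subrr.
have := sum_by_parts_central (G := fun i : nat => a i%:Z - a (- i%:Z)) alpha k B0.
rewrite (alpha_vanish (ltnSn k)) scale0r addr0 => <-.
rewrite shift_sym_comb linearD linear_sum linearZ_LR taua opprD addrACA -sumrB.
congr (_ + _); last by rewrite -scalerBr.
apply: eq_big_nat => i /andP[i_gt0 _]; rewrite linearZ_LR (linearD tau) !taua opprK.
by module_ring.
Qed.

Local Notation D := (f S - tau (f S)).

Lemma average_antisym_shift_sym_comb :
  g D + D + f D
  = alpha k *: (a (k%:Z + 2) - a (- (k%:Z + 2)))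
    + \sum_(1 <= i < k.+2)
        (alpha (if i == 1%N then 1%N else (i - 2)%N) + alpha i.-1
           - alpha i.+1 - alpha i.+2) *: (a i%:Z - a (- i%:Z)).
Proof.
pose d i := if i is 0%N then 0 else alpha i.-1 - alpha i.+1.
have D_eq : D = \sum_(1 <= i < k.+2) d i *: (a i%:Z - a (- i%:Z)).
  rewrite antisym_shift_sym_comb [RHS]big_nat_recr //= (alpha_vanish (ltnW (ltnSn k.+1))).
  rewrite subr0 addrC (_ : k%:Z + 1 = k.+1%:Z); last by lia.
  by congr (_ + _); apply: eq_big_nat => -[|i].
rewrite D_eq average_antisym_comb //.
have -> : d k.+2 = 0 by rewrite /d /= !alpha_vanish ?subrr //; lia.
have -> : d k.+1 = alpha k by rewrite /d (alpha_vanish (ltnW (ltnSn k.+1))) subr0.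
rewrite scale0r subr0 addrC (_ : k%:Z + 2 = k.+2%:Z); last by lia.
congr (_ + _); apply: eq_big_nat => -[|[|i]] // _.
  by congr (_ *: _); rewrite /d /=; ring.
by congr (_ *: _); rewrite /d /= subn2; ring.
Qed.

Lemma relation_of_average_antisym : g D + D + f D = 0 ->
  (alpha k *: (a (k%:Z + 2) - a (- (k%:Z + 2)))
     + \sum_(1 <= i < k.+2)
         (alpha (if i == 1%N then 1%N else (i - 2)%N) + alpha i.-1
            - alpha i.+1 - alpha i.+2) *: (a (i%:Z) - a (- i%:Z)) = 0)
  /\ (alpha k != 0 ->
       adim_le a (2 * k + 4) /\ (adim_is a (2 * k + 4) -> odd_relation a)).
Proof.
rewrite average_antisym_shift_sym_comb => rel; split=> // ak.
rewrite (_ : (2 * k + 4 = 2 * k.+2)%N); last by lia.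
rewrite (_ : k%:Z + 2 = k.+2%:Z) in rel; last by lia.
exact: antisym_relation_adim ak rel.
Qed.

Lemma relation_of_antisym : D = 0 ->
  (alpha k *: (a (k%:Z + 1) - a (- (k%:Z + 1)))
     + \sum_(1 <= i < k.+1) (alpha i.-1 - alpha i.+1) *: (a (i%:Z) - a (- i%:Z)) = 0)
  /\ (alpha k != 0 ->
       adim_le a (2 * k + 2) /\ (adim_is a (2 * k + 2) -> odd_relation a)).
Proof.
rewrite antisym_shift_sym_comb => rel; split=> // ak; rewrite -mulnSr.
rewrite (_ : k%:Z + 1 = k.+1%:Z) in rel; last by lia.
exact: antisym_relation_adim ak rel.
Qed.

Lemma relation_of_shift_fixed : f S = S ->
  (alpha k *: (a (k%:Z + 1) - a (- k%:Z))
     + \sum_(0 <= i < k) (alpha i - alpha i.+1) *: (a (i%:Z + 1) - a (- i%:Z)) = 0)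
  /\ (alpha k != 0 ->
       adim_le a (2 * k + 1) /\ (adim_is a (2 * k + 1) -> odd_relation a)).
Proof.
move=> fS; have := shift_sub_sym_comb; rewrite fS subrr => /esym rel.
by split=> // ak; rewrite addn1; apply: shifted_relation_adim ak rel.
Qed.

End AxisRelations.

Theorem lemma2 (F : fieldType) (M : lmodType F) (mul : M -> M -> M) (eta : F)
    (a : int -> M) (V : int -> nat -> M -> Prop)
    (hmul : comm_bilinear mul)
    (hchar : (2%:R : F) != 0)
    (heta0 : eta != 0) (heta1 : eta != 1) (heta2 : eta != 2%:R^-1)
    (hdih : dihedral mul eta a V)
    (f1 f2 f3 tau0 : M -> M)
    (hf1 : is_auto mul f1) (hf1a : forall j, f1 (a j) = a (1 + j))
    (hf2 : is_auto mul f2) (hf2a : forall j, f2 (a j) = a (2 + j))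
    (hf3 : is_auto mul f3) (hf3a : forall j, f3 (a j) = a (3 + j))
    (htau0 : forall u, miyamoto (V 0) u (tau0 u))
    (x y z : M) (k : nat) (alpha : nat -> F)
    (halpha : forall i, (k < i)%N -> alpha i = 0)
    (hx : forall g, in_gen_group (fun h => h = f1 \/ h = tau0) g -> g x = x)
    (hy : [/\ f3 y = y, tau0 (f1 y) = f2 y & tau0 y = y])
    (hz : tau0 z = z /\ tau0 (f1 z) = f1 z)
    (hrel : x + y + z + \sum_(1 <= i < k.+1) alpha i *: (a (i%:Z) + a (- i%:Z))
              + alpha 0%N *: a 0 = 0) :
  (* (1) ; alpha_{i-2} for i = 1 is alpha_{-1} := alpha_1 *)
  ((alpha k *: (a (k%:Z + 2) - a (- (k%:Z + 2)))
     + \sum_(1 <= i < k.+2)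
         (alpha (if i == 1%N then 1%N else (i - 2)%N) + alpha i.-1
            - alpha i.+1 - alpha i.+2) *: (a (i%:Z) - a (- i%:Z)) = 0)
   /\ (alpha k != 0 ->
        adim_le a (2 * k + 4) /\ (adim_is a (2 * k + 4) -> odd_relation a)))
  /\
  (* (2) *)
  (y = 0 ->
   (alpha k *: (a (k%:Z + 1) - a (- (k%:Z + 1)))
     + \sum_(1 <= i < k.+1) (alpha i.-1 - alpha i.+1) *: (a (i%:Z) - a (- i%:Z)) = 0)
   /\ (alpha k != 0 ->
        adim_le a (2 * k + 2) /\ (adim_is a (2 * k + 2) -> odd_relation a)))
  /\
  (* (3) *)
  (y = 0 -> z = 0 ->
   (alpha k *: (a (k%:Z + 1) - a (- k%:Z))
     + \sum_(0 <= i < k) (alpha i - alpha i.+1) *: (a (i%:Z + 1) - a (- i%:Z)) = 0)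
   /\ (alpha k != 0 ->
        adim_le a (2 * k + 1) /\ (adim_is a (2 * k + 1) -> odd_relation a))).
Proof.
have [gen _ axes _] := hdih.
pose f1L := linear_of hf1.1; pose tauL := linear_of (miyamoto_linear (axes 0) htau0).
have [gL f1K ga] := shift_inverse hf1 hf1a.
have f1a j : f1L (a j) = a (1 + j) := hf1a j.
have tau_a j : tauL (a j) = a (- j) := dihedral_reflection hdih htau0 j.
have f1f1 u : f1L (f1L u) = f2 u.
  by apply: (generated_auto_comp gen hf1 hf1 hf2 hf1a hf1a) => j; rewrite hf2a.
have f1f2 u : f1L (f2 u) = f3 u.
  by apply: (generated_auto_comp gen hf1 hf2 hf3 hf1a hf2a) => j; rewrite hf3a.
have fx : f1L x = x by apply: hx; apply: gg_gen; left.
have taux : tauL x = x by apply: hx; apply: gg_gen; right.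
have [fy3 tau_fy _] := hy; have [_ tau_fz] := hz.
have tau_f1y : tauL (f1L y) = f1L (f1L y) by rewrite f1f1.
have f1_cube_y : f1L (f1L (f1L y)) = y by rewrite [f1L (f1L y)]f1f1 f1f2.
have sum0 : x + y + z + sym_comb a k alpha = 0 by rewrite /sym_comb addrA.
split; [|split].
- apply: (relation_of_average_antisym f1a ga tau_a halpha).
  exact: (antisym_shift_orbit fx sum0 taux tau_fz tau_f1y f1K f1_cube_y).
- move=> y0; apply: (relation_of_antisym f1a ga tau_a halpha).
  by rewrite (antisym_shift_eq fx sum0 taux tau_fz tau_f1y) y0 !(linear0 f1L) subrr.
- move=> y0 z0; apply: (relation_of_shift_fixed f1a ga).
  exact: (shift_fixed fx sum0 y0 z0).
Qed.
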